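(* Let $\lambda$ be a nonzero real number and $n$ a positive integer. Then $$(n-1)!\,H_{n,-\lambda}=\sum_{k=1}^{n}(-1)^{n-k}\beta_{k-1,\lambda}(1-\lambda)\,S_{1,-\lambda}(n,k).$$
   Context: For a nonzero real parameter $\mu$ (used here with $\mu=\lambda$ and $\mu=-\lambda$), real $y$ and integer $k\ge0$: $(y)_{0,\mu}=1$, $(y)_{k,\mu}=y(y-\mu)\cdots(y-(k-1)\mu)$; $(y)_0=1$, $(y)_k=y(y-1)\cdots(y-k+1)$. The degenerate exponential is $e_\mu^x(t)=\sum_{k\ge0}(x)_{k,\mu}t^k/k!=(1+\mu t)^{x/\mu}$, $e_\mu(t)=e^1_\mu(t)$. The degenerate Bernoulli polynomials are defined by $\frac{t}{e_\mu(t)-1}e_\mu^x(t)=\sum_{n\ge0}\beta_{n,\mu}(x)\frac{t^n}{n!}$. The degenerate Stirling numbers of the first kind $S_{1,\mu}(n,k)$ are defined by $(x)_{n}=\sum_{k=0}^{n}S_{1,\mu}(n,k)(x)_{k,\mu}$ ($n\ge0$). The degenerate harmonic numbers are $H_{0,\mu}=0$ and $H_{n,\mu}=\sum_{k=1}^{n}\frac{1}{\mu}\binom{\mu}{k}(-1)^{k-1}$ for $n\ge1$. *)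

From mathcomp Require Import all_boot all_order all_algebra.
Set Implicit Arguments. Unset Strict Implicit. Unset Printing Implicit Defensive.
Import Order.TTheory GRing.Theory Num.Theory.
Local Open Scope ring_scope.

Section Degenerate.
Variable R : realFieldType.

Definition dfall (mu y : R) (k : nat) : R := \prod_(i < k) (y - i%:R * mu).

Definition ffall (y : R) (k : nat) : R := \prod_(i < k) (y - i%:R).

Definition gbinom (y : R) (k : nat) : R := ffall y k / (k`!)%:R.

Definition fps_mul (a b : nat -> R) (n : nat) : R :=
  \sum_(i < n.+1) a i * b (n - i)%N.

(* coefficients of e_mu^x(t) = sum_k (x)_{k,mu} t^k / k! *)
Definition dexp_coef (mu x : R) (k : nat) : R := dfall mu x k / (k`!)%:R.

(* beta is the family of degenerate Bernoulli polynomials for parameter mu: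
   as formal power series in t,
   (e_mu(t) - 1) * sum_n beta n x t^n/n! = t * e_mu^x(t),
   i.e. sum_n beta n x t^n/n! = t/(e_mu(t)-1) * e_mu^x(t). *)
Definition is_deg_bernoulli (mu : R) (beta : nat -> R -> R) : Prop :=
  forall (x : R) (n : nat),
    fps_mul (fun k => if k == 0%N then 0 else dexp_coef mu 1 k)
            (fun k => beta k x / (k`!)%:R) n
    = (if n == 0%N then 0 else dexp_coef mu x n.-1).

Definition is_deg_stirling1 (mu : R) (S : nat -> nat -> R) : Prop :=
  forall (n : nat) (x : R), ffall x n = \sum_(k < n.+1) S n k * dfall mu x k.

Definition deg_harmonic (mu : R) (n : nat) : R :=
  \sum_(1 <= k < n.+1) mu^-1 * gbinom mu k * (-1) ^+ (k.-1).

End Degenerate.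

(* Let A(z) = (z + lam) (z + lam + 1) ... (z + lam + n - 1) and expand A in the
   basis (z)_{k,lam}. Its forward difference A(z + 1) - A(z) is
   n (z + lam + 1) ... (z + lam + n - 1), whose coordinates are, by the defining
   relation of S_{1,-lam} at x = -(z + lam), n (-1)^(n-1-j) S_{1,-lam}(n, j + 1).
   The generating function of beta_{k,lam} says that the linear functional
   (z)_{j,lam} |-> beta_{j,lam}(y) maps (z + 1)_{k,lam} - (z)_{k,lam} to
   k (y)_{k-1,lam} = ((y + lam)_{k,lam} - (y)_{k,lam}) / lam, hence maps the
   difference of any polynomial P to (P(y + lam) - P(y)) / lam. For P = A and
   y = 1 - lam the right-hand side of the theorem is thus
   ((1 + lam)^(n) - n!) / (n lam), with x^(n) the rising factorial, and the
   alternating binomial sum defining H_{n,-lam} has the same closed form up to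
   the factor (n - 1)!. Coordinates are compared by evaluating at the nodes
   i lam, where the basis is triangular. *)

From mathcomp Require Import all_boot all_algebra.
From mathcomp Require Import ring.
Set Implicit Arguments. Unset Strict Implicit. Unset Printing Implicit Defensive.
Import GRing.Theory Num.Theory.
Local Open Scope ring_scope.

Lemma sum_ord_widen (V : nmodType) (f : nat -> V) k N :
  (k < N)%N -> (forall j, (k < j)%N -> f j = 0) ->
  \sum_(j < k.+1) f j = \sum_(j < N) f j.
Proof.
move=> kN f0; rewrite (big_ord_widen N f kN) big_mkcond /=.
by apply: eq_bigr => j _; case: ifPn => // /negbTE; rewrite ltnNge => /negbFE/f0->.
Qed.

Lemma signrB (R : pzRingType) m j :
  (j <= m)%N -> (-1) ^+ (m - j) = (-1) ^+ m * (-1) ^+ j :> R.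
Proof. by move=> jm; rewrite -signr_odd oddB // signr_addb !signr_odd. Qed.

Section DegenerateFalling.
Variable R : realFieldType.
Implicit Types (mu x y z : R) (c : nat -> R).

Lemma dfall0 mu x : dfall mu x 0 = 1.
Proof. by rewrite /dfall big_ord0. Qed.

Lemma dfallS mu x k : dfall mu x k.+1 = dfall mu x k * (x - k%:R * mu).
Proof. by rewrite /dfall big_ord_recr. Qed.

Lemma dfallSl mu x k : dfall mu x k.+1 = x * dfall mu (x - mu) k.
Proof.
rewrite /dfall big_ord_recl /= mul0r subr0; congr (_ * _).
by apply: eq_bigr => i _; rewrite /bump /= natrD; ring.
Qed.

Lemma dfallN mu x k : dfall (- mu) x k = (-1) ^+ k * dfall mu (- x) k.
Proof.
elim: k => [|k IH]; first by rewrite /dfall !big_ord0 mulr1.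
by rewrite !dfallS IH exprS; ring.
Qed.

Lemma ffallSl x k : ffall x k.+1 = x * ffall (x - 1) k.
Proof.
rewrite /ffall big_ord_recl /= subr0; congr (_ * _).
by apply: eq_bigr => i _; rewrite /bump /= natrD; ring.
Qed.

Definition rfall x k : R := \prod_(i < k) (x + i%:R).

Lemma rfallS x k : rfall x k.+1 = rfall x k * (x + k%:R).
Proof. by rewrite /rfall big_ord_recr. Qed.

Lemma rfallSl x k : rfall x k.+1 = x * rfall (x + 1) k.
Proof.
rewrite /rfall big_ord_recl /= addr0; congr (_ * _).
by apply: eq_bigr => i _; rewrite /bump /= natrD; ring.
Qed.

Lemma ffallN x k : ffall (- x) k = (-1) ^+ k * rfall x k.
Proof.
elim: k => [|k IH]; first by rewrite /ffall /rfall !big_ord0 mulr1.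
by rewrite /ffall big_ord_recr -/(ffall _ _) IH rfallS exprS /=; ring.
Qed.

Lemma rfall1 k : rfall 1 k = (k`!)%:R.
Proof.
elim: k => [|k IH]; first by rewrite /rfall big_ord0.
by rewrite rfallS IH factS natrM -natr1; ring.
Qed.

Lemma rfall_diff x k :
  rfall (x + 1) k.+1 - rfall x k.+1 = k.+1%:R * rfall (x + 1) k.
Proof. by rewrite rfallS rfallSl -natr1; ring. Qed.

Lemma dfallD mu x y k :
  dfall mu (x + y) k =
  \sum_(i < k.+1) 'C(k, i)%:R * dfall mu x i * dfall mu y (k - i).
Proof.
elim: k => [|k IH].
  by rewrite big_ord_recl big_ord0 /dfall !big_ord0 bin0 !mul1r addr0.
have -> : \sum_(i < k.+2) 'C(k.+1, i)%:R * dfall mu x i * dfall mu y (k.+1 - i)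
    = \sum_(i < k.+1) 'C(k, i)%:R * dfall mu x i.+1 * dfall mu y (k - i)
    + \sum_(i < k.+1) 'C(k, i)%:R * dfall mu x i * dfall mu y (k.+1 - i).
  rewrite big_ord_recl [X in _ = _ + X]big_ord_recl.
  under eq_bigr => i _ do rewrite lift0 binS natrD !mulrDl subSS.
  under [X in _ = _ + (_ + X)]eq_bigr => i _ do rewrite lift0 subSS.
  rewrite big_split /= [\sum_(i < k.+1) 'C(k, i.+1)%:R * _ * _]big_ord_recr /=.
  by rewrite (bin_small (ltnSn k)) !mul0r addr0 !bin0; ring.
rewrite dfallS IH big_distrl -big_split /=; apply: eq_bigr => i _.
have ik : (i <= k)%N := ltn_ord i.
by rewrite subSn // !dfallS natrB //; ring.
Qed.

Lemma dfallDmu mu x k :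
  dfall mu (x + mu) k - dfall mu x k = k%:R * mu * dfall mu x k.-1.
Proof.
case: k => [|k]; first by rewrite /dfall !big_ord0 subrr !mul0r.
by rewrite dfallSl dfallS addrK /= -natr1; ring.
Qed.

Lemma dfall_node_eq0 mu i k : (i < k)%N -> dfall mu (i%:R * mu) k = 0.
Proof.
elim: k => // k IH; rewrite dfallS ltnS leq_eqVlt => /orP[/eqP-> | /IH->].
  by rewrite subrr mulr0.
by rewrite mul0r.
Qed.

Lemma dfall_node_neq0 mu i : mu != 0 -> dfall mu (i%:R * mu) i != 0.
Proof.
move=> mu0; apply/prodf_neq0 => j _.
by rewrite -mulrBl mulf_neq0 // subr_eq0 eqr_nat neq_ltn ltn_ord orbT.
Qed.

Definition dfall_comb mu N c z : R := \sum_(k < N) c k * dfall mu z k.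

(* The matrix of the nodes i mu against the basis is triangular with nonzero diagonal. *)
Lemma dfall_comb_nodes_eq0 mu N c :
    mu != 0 -> (forall i, (i < N)%N -> dfall_comb mu N c (i%:R * mu) = 0) ->
  forall k, (k < N)%N -> c k = 0.
Proof.
move=> mu0 c0; elim/ltn_ind=> k IH kN.
have := c0 k kN; rewrite /dfall_comb (bigD1 (Ordinal kN)) //= big1 ?addr0.
  by move/eqP; rewrite mulf_eq0 (negbTE (dfall_node_neq0 k mu0)) orbF => /eqP.
move=> j /=; rewrite -val_eqE /=; case: ltngtP => // [jk | kj] _.
  by rewrite IH ?mul0r.
by rewrite dfall_node_eq0 ?mulr0.
Qed.

Lemma prod_dfall_expansion mu (a : nat -> R) k :
  exists c, forall z, \prod_(i < k) (z + a i) = dfall_comb mu k.+1 c z.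
Proof.
elim: k => [|k [c prodE]].
  exists (fun=> 1) => z.
  by rewrite big_ord0 /dfall_comb big_ord1 /dfall big_ord0 mulr1.
(* z (z)_j = (z)_(j+1) + j mu (z)_j *)
exists (fun j => (if j is j'.+1 then c j' else 0)
               + (if (j <= k)%N then (j%:R * mu + a k) * c j else 0)) => z.
rewrite big_ord_recr /= prodE /dfall_comb big_distrl /=.
under [RHS]eq_bigr => j _ do rewrite mulrDl.
rewrite big_split /= [X in _ = X + _]big_ord_recl [X in _ = _ + X]big_ord_recr /= ltnn.
rewrite !mul0r add0r addr0 -big_split /=; apply: eq_bigr => j _.
by rewrite add0n /bump leq0n add1n -ltnS ltn_ord dfallS; ring.
Qed.

Lemma dfall_combB mu N c d z :
  dfall_comb mu N (fun k => c k - d k) z = dfall_comb mu N c z - dfall_comb mu N d z.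
Proof. by rewrite /dfall_comb -sumrB; apply: eq_bigr => k _; rewrite mulrBl. Qed.

Lemma dfall_comb_shift1 mu N c z :
  dfall_comb mu N c (z + 1) =
  dfall_comb mu N (fun j => \sum_(k < N) c k * ('C(k, j)%:R * dfall mu 1 (k - j))) z.
Proof.
rewrite /dfall_comb; under [RHS]eq_bigr => j _ do rewrite mulr_suml.
rewrite exchange_big /=; apply: eq_bigr => k _; rewrite dfallD.
rewrite (@sum_ord_widen _ (fun j => 'C(k, j)%:R * dfall mu z j * dfall mu 1 (k - j))
  _ _ (ltn_ord k)) => [|j kj]; last by rewrite bin_small // !mul0r.
by rewrite mulr_sumr; apply: eq_bigr => j _; ring.
Qed.

End DegenerateFalling.

Section DegenerateBernoulli.
Variables (R : realFieldType) (mu : R) (beta : nat -> R -> R).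
Hypothesis beta_def : is_deg_bernoulli mu beta.

Lemma deg_bernoulli_recurrence y k :
  \sum_(j < k.+1) 'C(k, j)%:R * dfall mu 1 (k - j) * beta j y
  = beta k y + k%:R * dfall mu y k.-1.
Proof.
rewrite big_ord_recr /= subnn binn dfall0 !mul1r addrC; congr (_ + _).
case: k => [|k]; first by rewrite big_ord0 mul0r.
have fact_neq0 m : (m`!)%:R != 0 :> R by rewrite pnatr_eq0 -lt0n fact_gt0.
have := beta_def y k.+1; rewrite /fps_mul big_ord_recl /= mul0r add0r /dexp_coef.
move=> /(congr1 (fun t => (k.+1`!)%:R * t)).
rewrite [X in _ = X](_ : _ = k.+1%:R * dfall mu y k); last by rewrite factS natrM; field.
move=> <-; rewrite mulr_sumr (reindex_inj rev_ord_inj) /=; apply: eq_bigr => j _.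
rewrite /bump leq0n add1n; have jk : (j.+1 <= k.+1)%N := ltn_ord j.
rewrite subKn // bin_sub //.
have := bin_fact jk; move/(congr1 (fun n => n%:R : R)); rewrite natrM natrM => binE.
by rewrite -binE; field; rewrite !fact_neq0.
Qed.

Hypothesis mu_neq0 : mu != 0.

Lemma deg_bernoulli_shift_comb N (c : nat -> R) y :
  \sum_(j < N) (\sum_(k < N) c k * ('C(k, j)%:R * dfall mu 1 (k - j)) - c j) * beta j y
  = mu^-1 * (dfall_comb mu N c (y + mu) - dfall_comb mu N c y).
Proof.
under eq_bigr => j _ do rewrite mulrBl mulr_suml.
rewrite sumrB exchange_big /= -sumrB /dfall_comb -sumrB mulr_sumr.
apply: eq_bigr => k _; rewrite -(@sum_ord_widen _
  (fun j => c k * ('C(k, j)%:R * dfall mu 1 (k - j)) * beta j y) _ _ (ltn_ord k)).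
  under eq_bigr => j _ do rewrite -mulrA.
  by rewrite -mulr_sumr deg_bernoulli_recurrence -[X in _ = _ * X]mulrBr dfallDmu; field.
by move=> j kj; rewrite bin_small // !mul0r mulr0 mul0r.
Qed.

Lemma deg_bernoulli_difference N (c v : nat -> R) y :
    (forall i, (i < N)%N ->
      dfall_comb mu N c (i%:R * mu + 1) - dfall_comb mu N c (i%:R * mu)
      = dfall_comb mu N v (i%:R * mu)) ->
  \sum_(j < N) v j * beta j y
  = mu^-1 * (dfall_comb mu N c (y + mu) - dfall_comb mu N c y).
Proof.
move=> cv; have shift_eq : forall j, (j < N)%N ->
    \sum_(k < N) c k * ('C(k, j)%:R * dfall mu 1 (k - j)) - c j - v j = 0.
  apply: (dfall_comb_nodes_eq0 mu_neq0) => i iN.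
  by rewrite !dfall_combB -dfall_comb_shift1 cv // subrr.
rewrite -deg_bernoulli_shift_comb; apply: eq_bigr => j _; congr (_ * _).
by apply/eqP; rewrite eq_sym -subr_eq0 shift_eq.
Qed.

End DegenerateBernoulli.

Section DegenerateStirling.
Variable R : realFieldType.

Lemma deg_stirling1_n0 (nu : R) S n : is_deg_stirling1 nu S -> S n.+1 0%N = 0.
Proof.
move=> S_def; have := S_def n.+1 0; rewrite ffallSl mul0r big_ord_recl big1 => [|j _].
  by rewrite dfall0 mulr1 addr0.
by rewrite lift0 dfallSl mul0r mulr0.
Qed.

Lemma deg_stirling1_rfall (mu : R) S m z :
    is_deg_stirling1 (- mu) S -> z + mu != 0 ->
  rfall (z + mu + 1) m = \sum_(j < m.+1) (-1) ^+ (m - j) * S m.+1 j.+1 * dfall mu z j.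
Proof.
move=> S_def zmu0; have := S_def m.+1 (- (z + mu)).
rewrite ffallSl big_ord_recl (deg_stirling1_n0 _ S_def) mul0r add0r.
under eq_bigr => j _ do rewrite lift0 dfallSl mulrCA.
have zmuN0 : - (z + mu) != 0 by rewrite oppr_eq0.
rewrite -mulr_sumr => /(mulfI zmuN0).
rewrite -opprD ffallN => stirlingE.
rewrite -[rfall _ m](signrMK m) stirlingE mulr_sumr; apply: eq_bigr => j _.
rewrite dfallN (_ : - (- (z + mu) - - mu) = z); last by ring.
by rewrite (@signrB _ m j (ltn_ord j)); ring.
Qed.

End DegenerateStirling.

Lemma sum_gbinom_alt (R : realFieldType) (mu : R) n :
  \sum_(1 <= k < n.+1) gbinom mu k * (-1) ^+ k.-1 = 1 - rfall (1 - mu) n / (n`!)%:R.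
Proof.
elim: n => [|n IH]; first by rewrite big_geq // /rfall big_ord0 divr1 subrr.
rewrite big_nat_recr //= IH /gbinom ffallSl (_ : mu - 1 = - (1 - mu)) ?ffallN; last by ring.
rewrite mulrCA mulrAC [(-1) ^+ n * _ * _]mulrC signrMK.
rewrite rfallS factS natrM -natr1; field.
by rewrite natr1 !pnatr_eq0 -lt0n fact_gt0.
Qed.

Lemma deg_harmonic_rfall (R : realFieldType) (mu : R) n :
  deg_harmonic mu n = mu^-1 * (1 - rfall (1 - mu) n / (n`!)%:R).
Proof.
by rewrite /deg_harmonic -sum_gbinom_alt mulr_sumr; apply: eq_bigr => k _; rewrite -mulrA.
Qed.

Section BernoulliStirling.
Variables (R : realFieldType) (lam : R) (beta : nat -> R -> R) (S : nat -> nat -> R).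
Hypotheses (lam_neq0 : lam != 0) (beta_def : is_deg_bernoulli lam beta)
  (S_def : is_deg_stirling1 (- lam) S).

Lemma deg_bernoulli_stirling_sum m :
  m.+1%:R * \sum_(j < m.+1) (-1) ^+ (m - j) * S m.+1 j.+1 * beta j (1 - lam)
  = lam^-1 * (rfall (1 + lam) m.+1 - (m.+1)`!%:R).
Proof.
have [c expandE] := prod_dfall_expansion lam (fun i => lam + i%:R) m.+1.
have {}expandE z : rfall (z + lam) m.+1 = dfall_comb lam m.+2 c z.
  by rewrite -expandE; apply: eq_bigr => i _; rewrite addrA.
pose v j := if (j < m.+1)%N then m.+1%:R * ((-1) ^+ (m - j) * S m.+1 j.+1) else 0.
have diffE i : (i < m.+2)%N ->
    dfall_comb lam m.+2 c (i%:R * lam + 1) - dfall_comb lam m.+2 c (i%:R * lam)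
    = dfall_comb lam m.+2 v (i%:R * lam).
  move=> _; rewrite -!expandE addrAC rfall_diff (deg_stirling1_rfall _ S_def); last first.
    by rewrite -{2}[lam]mul1r -mulrDl natr1 mulf_neq0 ?pnatr_eq0.
  rewrite /dfall_comb [RHS]big_ord_recr /= /v ltnn mul0r addr0 mulr_sumr.
  by apply: eq_bigr => j _; rewrite ltn_ord; exact: mulrA.
have := deg_bernoulli_difference beta_def lam_neq0 (1 - lam) diffE.
rewrite -!expandE subrK rfall1 => <-.
rewrite [RHS]big_ord_recr /= /v ltnn mul0r addr0 mulr_sumr.
by apply: eq_bigr => j _; rewrite ltn_ord; exact: mulrA.
Qed.

End BernoulliStirling.

Theorem theorem8 (R : realFieldType) (lam : R) (beta : nat -> R -> R)
    (S : nat -> nat -> R) (n : nat) :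
  lam != 0 ->
  is_deg_bernoulli lam beta ->
  is_deg_stirling1 (- lam) S ->
  (0 < n)%N ->
  ((n.-1)`!)%:R * deg_harmonic (- lam) n
  = \sum_(1 <= k < n.+1) (-1) ^+ (n - k) * beta k.-1 (1 - lam) * S n k.
Proof.
move=> lam0 beta_def S_def; case: n => [//|m] _ /=.
have m1_neq0 : m.+1%:R != 0 :> R by rewrite pnatr_eq0.
have fact_neq0 : m`!%:R != 0 :> R by rewrite pnatr_eq0 -lt0n fact_gt0.
rewrite big_add1 big_mkord /=; under eq_bigr => j _ do rewrite subSS mulrAC.
rewrite -[RHS](mulKf m1_neq0) (deg_bernoulli_stirling_sum lam0 beta_def S_def).
rewrite deg_harmonic_rfall opprK factS natrM; field.
by rewrite lam0 fact_neq0 addrC natr1 m1_neq0.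
Qed.
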